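(* Let $\textbf{F}$ be an IVF on a nonempty subset $\mathcal{X}$ of $\mathbb{R}^n$ that is $gH$-differentiable at $\bar{x}\in\mathcal{X}$, with linear IVF $\textbf{L}_{\bar{x}}$ as in the definition of $gH$-differentiability. Then the $gH$-gradient $\nabla\textbf{F}(\bar{x})$ exists and, for each $d=(d_1,\dots,d_n)^T\in\mathbb{R}^n$, \[\textbf{L}_{\bar{x}}(d)=d^T\odot\nabla\textbf{F}(\bar{x}),\quad\text{where } d^T\odot\nabla\textbf{F}(\bar{x})=\bigoplus_{i=1}^n d_i\odot D_i\textbf{F}(\bar{x}).\]
   Context: $I(\mathbb{R})$: closed bounded intervals $\textbf{A}=[\underline{a},\overline{a}]$ with Moore arithmetic ($\oplus$ endpointwise; $\lambda\odot\textbf{A}=[\lambda\underline{a},\lambda\overline{a}]$ if $\lambda\ge0$, $[\lambda\overline{a},\lambda\underline{a}]$ if $\lambda<0$); $gH$-difference $\textbf{A}\ominus_{gH}\textbf{B}=[\min\{\underline{a}-\underline{b},\overline{a}-\overline{b}\},\max\{\underline{a}-\underline{b},\overline{a}-\overline{b}\}]$; limits of intervals are in the norm $\max\{|\underline{a}|,|\overline{a}|\}$. An IVF is $\textbf{F}(x)=[\underline{f}(x),\overline{f}(x)]$. The $i$-th partial $gH$-derivative $D_i\textbf{F}(\bar{x})$ is the $gH$-derivative $\lim_{h\to0}\frac1h\odot(\textbf{G}_i(\bar{x}_i+h)\ominus_{gH}\textbf{G}_i(\bar{x}_i))$ of $\textbf{G}_i(x_i)=\textbf{F}(\bar{x}_1,\dots,x_i,\dots,\bar{x}_n)$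 at $\bar{x}_i$, when it exists; $\nabla\textbf{F}(\bar{x})=(D_1\textbf{F}(\bar{x}),\dots,D_n\textbf{F}(\bar{x}))^T$ exists when all these exist. An IVF $\textbf{L}:\mathbb{R}^n\to I(\mathbb{R})$ is linear if $\textbf{L}(x)=\bigoplus_{i=1}^n x_i\odot\textbf{L}(e_i)$ for all $x$, $e_i$ the standard basis. $\textbf{F}$ is $gH$-differentiable at $\bar{x}$ if there exist a linear IVF $\textbf{L}_{\bar{x}}:\mathbb{R}^n\to I(\mathbb{R})$, an IVF $\textbf{E}(\textbf{F}(\bar{x});d)$ and $\delta>0$ such that $(\textbf{F}(\bar{x}+d)\ominus_{gH}\textbf{F}(\bar{x}))\ominus_{gH}\textbf{L}_{\bar{x}}(d)=\lVert d\rVert\odot\textbf{E}(\textbf{F}(\bar{x});d)$ for all $d$ with $\lVert d\rVert<\delta$, where $\textbf{E}(\textbf{F}(\bar{x});d)\to\textbf{0}$ as $\lVert d\rVert\to0$. *)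

From HB Require Import structures.
From mathcomp Require Import all_boot all_order all_algebra.
From mathcomp Require Import reals.
Set Implicit Arguments. Unset Strict Implicit. Unset Printing Implicit Defensive.
Import Order.TTheory GRing.Theory Num.Theory.
Local Open Scope ring_scope.

Section IntervalArith.
Variable R : realType.

Record cint := Cint { ilo : R; ihi : R; ilo_le_ihi : ilo <= ihi }.

Lemma cint_add_le (A B : cint) : ilo A + ilo B <= ihi A + ihi B.
Proof. by apply: lerD; apply: ilo_le_ihi. Qed.

Definition iadd (A B : cint) : cint :=
  Cint (cint_add_le A B).

Lemma cint_scale_pos (l : R) (A : cint) : 0 <= l -> l * ilo A <= l * ihi A.
Proof. by move=> h; apply: ler_wpM2l => //; apply: ilo_le_ihi. Qed.

Lemma cint_scale_neg (l : R) (A : cint) : ~~ (0 <= l) -> l * ihi A <= l * ilo A.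
Proof.
move=> h; have hl : l <= 0 by rewrite ltW // ltNge.
by rewrite ler_wnM2l //; apply: ilo_le_ihi.
Qed.

Definition iscale (l : R) (A : cint) : cint :=
  match boolP (0 <= l) with
  | AltTrue h => Cint (cint_scale_pos A h)
  | AltFalse h => Cint (cint_scale_neg A h)
  end.

Lemma cint_minmax (a b : R) : Num.min a b <= Num.max a b.
Proof. by rewrite ge_min !le_max lexx. Qed.

Definition igH (A B : cint) : cint :=
  Cint (cint_minmax (ilo A - ilo B) (ihi A - ihi B)).

Definition izero : cint := Cint (lexx (0 : R)).

Definition inorm (A : cint) : R := Num.max `|ilo A| `|ihi A|.

Definition isum (n : nat) (A : 'I_n -> cint) : cint :=
  \big[iadd/izero]_(i < n) A i.

Definition vnorm (n : nat) (d : 'rV[R]_n) : R :=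
  Num.sqrt (\sum_(i < n) d 0 i ^+ 2).

Definition ebasis (n : nat) (i : 'I_n) : 'rV[R]_n := delta_mx 0 i.

(* gH-derivative of G : R -> I(R) at t equals D:
   lim_{h -> 0} (1/h) (.) (G (t+h) -gH G t) = D, the limit taken in the
   norm of I(R), i.e. || (1/h)(.)(G(t+h) -gH G t) -gH D || -> 0. *)
Definition is_gH_derivative (G : R -> cint) (t : R) (D : cint) : Prop :=
  forall eps : R, 0 < eps -> exists delta : R, 0 < delta /\
    forall h : R, h != 0 -> `|h| < delta ->
      inorm (igH (iscale h^-1 (igH (G (t + h)) (G t))) D) < eps.

(* i-th partial gH-derivative of F at xbar equals D:
   G_i(x_i) = F(xbar_1, ..., x_i, ..., xbar_n). *)
Definition is_partial_gH (n : nat) (F : 'rV[R]_n -> cint) (xbar : 'rV[R]_n)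
    (i : 'I_n) (D : cint) : Prop :=
  is_gH_derivative (fun t => F (\row_(j < n) if j == i then t else xbar 0 j))
    (xbar 0 i) D.

Definition linear_ivf (n : nat) (L : 'rV[R]_n -> cint) : Prop :=
  forall x : 'rV[R]_n, L x = isum (fun i => iscale (x 0 i) (L (ebasis i))).

Definition gH_differentiable_with (n : nat) (F : 'rV[R]_n -> cint)
    (xbar : 'rV[R]_n) (L : 'rV[R]_n -> cint) : Prop :=
  linear_ivf L /\
  exists (E : 'rV[R]_n -> cint) (delta : R), 0 < delta /\
    (forall d : 'rV[R]_n, vnorm d < delta ->
       igH (igH (F (xbar + d)) (F xbar)) (L d) = iscale (vnorm d) (E d)) /\
    (forall eps : R, 0 < eps -> exists gam : R, 0 < gam /\
       forall d : 'rV[R]_n, 0 < vnorm d -> vnorm d < gam ->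
         inorm (igH (E d) izero) < eps).

End IntervalArith.

From HB Require Import structures.
From mathcomp Require Import all_boot all_order all_algebra.
From mathcomp Require Import reals.
Import Order.TTheory GRing.Theory Num.Theory.
Local Open Scope ring_scope.

(* The i-th partial gH-derivative of F at xbar is L(e_i).  By linearity
   L(h e_i) = h (.) L(e_i), and the norm of a gH-difference,
   ||A -gH B|| = max(|lo A - lo B|, |hi A - hi B|), is absolutely homogeneous:
   ||l A -gH l B|| = |l| ||A -gH B||.  Hence the error of the difference
   quotient, ||(1/h)(F(xbar + h e_i) -gH F(xbar)) -gH L(e_i)||, equals
   |h|^-1 ||(F(xbar + h e_i) -gH F(xbar)) -gH L(h e_i)|| = ||E(h e_i)||,
   which tends to 0.  The formula for L d is then the linearity of L. *)

Section IntervalArithmetic.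
Variable R : realType.
Implicit Types (A B C : cint R) (k : R).

Lemma cint_ext A B : ilo A = ilo B -> ihi A = ihi B -> A = B.
Proof.
case: A B => [a1 a2 pa] [b1 b2 pb] /= e1 e2; subst.
by rewrite (bool_irrelevance pa pb).
Qed.

Lemma ilo_iscale k A : ilo (iscale k A) = if 0 <= k then k * ilo A else k * ihi A.
Proof. by rewrite /iscale; destruct boolP. Qed.

Lemma ihi_iscale k A : ihi (iscale k A) = if 0 <= k then k * ihi A else k * ilo A.
Proof. by rewrite /iscale; destruct boolP. Qed.

Lemma ilo_isum n (f : 'I_n -> cint R) : ilo (isum f) = \sum_(i < n) ilo (f i).
Proof. by rewrite /isum; elim/big_rec2: _ => //= i y A _ ->. Qed.

Lemma ihi_isum n (f : 'I_n -> cint R) : ihi (isum f) = \sum_(i < n) ihi (f i).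
Proof. by rewrite /isum; elim/big_rec2: _ => //= i y A _ ->. Qed.

Lemma iscaleK [k] : k != 0 -> cancel (iscale k) (iscale k^-1).
Proof.
move=> k0 A; apply: cint_ext;
by rewrite !(ilo_iscale, ihi_iscale) invr_ge0; have [_|_] := leP 0 k; rewrite mulKf.
Qed.

Lemma inorm_igH A B : inorm (igH A B) = Num.max `|ilo A - ilo B| `|ihi A - ihi B|.
Proof. by rewrite /inorm /=; case: (leP (ilo A - ilo B)) => // _; rewrite maxC. Qed.

Lemma inorm_igH0 A : inorm (igH A (izero R)) = inorm A.
Proof. by rewrite inorm_igH /inorm /= !subr0. Qed.

Lemma maxr_normM k (a b : R) :
  Num.max `|k * a| `|k * b| = `|k| * Num.max `|a| `|b|.
Proof. by rewrite maxr_pMr // !normrM. Qed.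

Lemma inorm_iscale k A : inorm (iscale k A) = `|k| * inorm A.
Proof.
rewrite /inorm ilo_iscale ihi_iscale.
by case: ifP => _; rewrite maxr_normM // maxC.
Qed.

Lemma inorm_igHZ k A B :
  inorm (igH (iscale k A) (iscale k B)) = `|k| * inorm (igH A B).
Proof.
rewrite !inorm_igH !ilo_iscale !ihi_iscale.
by case: ifP => _; rewrite -!mulrBr maxr_normM // maxC.
Qed.

Lemma inorm_igH_iscaleV k A C : k != 0 ->
  inorm (igH (iscale k^-1 A) C) = `|k|^-1 * inorm (igH A (iscale k C)).
Proof.
by move=> k0; rewrite -{1}[C](iscaleK k0) inorm_igHZ normfV.
Qed.

End IntervalArithmetic.

Section CoordinateDirections.
Variables (R : realType) (n : nat).
Implicit Types (x : 'rV[R]_n) (i : 'I_n) (h : R).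

Lemma vnormZ_ebasis i h : vnorm (h *: ebasis R i) = `|h|.
Proof.
rewrite /vnorm (bigD1 i) //= big1 ?addr0.
  by rewrite !mxE !eqxx mulr1 sqrtr_sqr.
by move=> j ji; rewrite !mxE (negbTE ji) mulr0 expr0n.
Qed.

Lemma row_set_coordE x i h :
  (\row_(j < n) if j == i then x 0 i + h else x 0 j) = x + h *: ebasis R i.
Proof.
apply/rowP => j; rewrite !mxE.
by case: eqP => [->|_]; rewrite ?eqxx ?mulr1 ?mulr0 ?addr0.
Qed.

Lemma row_set_coord_id x i :
  (\row_(j < n) if j == i then x 0 i else x 0 j) = x.
Proof. by apply/rowP => j; rewrite mxE; case: eqP => [->|]. Qed.

Lemma linear_ivfZ_ebasis (L : 'rV[R]_n -> cint R) i h : linear_ivf L ->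
  L (h *: ebasis R i) = iscale h (L (ebasis R i)).
Proof.
move=> linL; rewrite linL; apply: cint_ext;
  rewrite ?ilo_isum ?ihi_isum (bigD1 i) //= big1 ?addr0 ?mxE ?eqxx ?mulr1 //;
  by move=> j ji; rewrite ?ilo_iscale ?ihi_iscale !mxE (negbTE ji) mulr0 lexx mul0r.
Qed.

Lemma gH_differentiable_partial (F : 'rV[R]_n -> cint R) x
    (L : 'rV[R]_n -> cint R) i :
  gH_differentiable_with F x L -> is_partial_gH F x i (L (ebasis R i)).
Proof.
move=> [linL [E [delta [delta_gt0 [Eeq Elim]]]]] eps eps_gt0.
have [gam [gam_gt0 Esmall]] := Elim eps eps_gt0.
exists (Num.min delta gam); split; first by rewrite lt_min delta_gt0.
move=> h h0; rewrite lt_min => /andP[h_delta h_gam].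
rewrite row_set_coordE row_set_coord_id inorm_igH_iscaleV //.
have hd := vnormZ_ebasis i h.
have := Eeq (h *: ebasis R i); rewrite hd => /(_ h_delta)/(congr1 (@inorm R)).
rewrite linear_ivfZ_ebasis // inorm_iscale normr_id => ->.
rewrite mulKf ?normr_eq0 // -inorm_igH0.
by apply: Esmall; rewrite hd // normr_gt0.
Qed.

End CoordinateDirections.

Theorem theorem3p1 (R : realType) (n : nat) (X : 'rV[R]_n -> Prop)
  (F : 'rV[R]_n -> cint R) (xbar : 'rV[R]_n) (L : 'rV[R]_n -> cint R) :
  (exists x, X x) -> X xbar ->
  gH_differentiable_with F xbar L ->
  exists gradF : 'I_n -> cint R,
    (forall i : 'I_n, is_partial_gH F xbar i (gradF i)) /\
    (forall d : 'rV[R]_n,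
       L d = isum (fun i : 'I_n => iscale (d 0 i) (gradF i))).
Proof.
move=> _ _ Fdiff; exists (fun i => L (ebasis R i)); split.
  by move=> i; apply: gH_differentiable_partial.
by case: Fdiff.
Qed.
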